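(* There is a constant $C_{\rm FQ}>0$ such that, as $n\to\infty$, the proportion of integers $m\in[q_n,q_{n+1})$ satisfying $k_{\max}(m)-k_{\min}(m)\ge C_{\rm FQ}\log(n)$ tends to $1$.
   Context: Given an increasing sequence $\{q_i\}$, a decomposition $m=q_{\ell_1}+\dots+q_{\ell_t}$ with $q_{\ell_1}>\dots>q_{\ell_t}$ is FQ-legal if $|\ell_i-\ell_j|\notin\{0,1,3,4\}$ for $i\neq j$ and $\{1,3\}\not\subset\{\ell_1,\dots,\ell_t\}$. The Fibonacci Quilt sequence $\{q_n\}$ has $q_1=1$ and each $q_i$ ($i\ge 2$) is the smallest positive integer with no FQ-legal decomposition using $q_1,\dots,q_{i-1}$ (it begins $1,2,3,4,5,7,9,12,\dots$). For a positive integer $m$, $k_{\min}(m)$ (resp. $k_{\max}(m)$) is the smallest (resp. largest) number of summands in any FQ-legal decomposition of $m$. *)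

From mathcomp Require Import all_boot.
From Stdlib Require Import Reals.

Set Implicit Arguments.
Unset Strict Implicit.
Unset Printing Implicit Defensive.

Definition ndist (a b : nat) : nat := (a - b) + (b - a).

Definition FQ_legal (L : seq nat) : bool :=
  [&& uniq L, all (fun l => 0 < l) L,
      all (fun a => all (fun b => (a == b) || (ndist a b \notin [:: 1; 3; 4])) L) L
    & ~~ ((1 \in L) && (3 \in L))].

(* For S a set of 0-based positions in 'I_N, the list of (1-based) indices. *)
Definition idx_of (N : nat) (S : {set 'I_N}) : seq nat :=
  [seq (val j).+1 | j <- enum S].

(* [has_decomp s m]: with s = [:: q_1; ...; q_k], m has an FQ-legal
   decomposition using q_1, ..., q_k (position j of s holds q_(j+1)). *)
Definition has_decomp (s : seq nat) (m : nat) : bool :=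
  [exists S : {set 'I_(size s)},
     FQ_legal (idx_of S) && ((\sum_(j in S) nth 0 s j) == m)].

(* Smallest positive integer with no FQ-legal decomposition using s.
   Such an integer exists in [1, sumn s + 1], since sumn s + 1 exceeds
   every subset sum. *)
Definition FQ_next (s : seq nat) : nat :=
  nth 0 [seq m <- iota 1 (sumn s).+1 | ~~ has_decomp s m] 0.

(* [FQ_list n] = [:: q_1; ...; q_n]. For n = 0 -> 1, FQ_next [::] = 1 = q_1. *)
Fixpoint FQ_list (n : nat) : seq nat :=
  match n with
  | 0 => [::]
  | n'.+1 => rcons (FQ_list n') (FQ_next (FQ_list n'))
  end.

(* The Fibonacci Quilt sequence, indexed from 1 (q 0 = 0 is a dummy value). *)
Definition q (n : nat) : nat := last 0 (FQ_list n).

(* Decompositions of m: sets S of positions in 'I_m (position j <-> index j+1,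
   so indices range over 1..m; since q is strictly increasing with q_1 = 1,
   q_l >= l, so any index used in a decomposition of m is <= m). *)
Definition FQ_dec (m : nat) (S : {set 'I_m}) : bool :=
  FQ_legal (idx_of S) && ((\sum_(j in S) q (val j).+1) == m).

(* Largest / smallest number of summands in an FQ-legal decomposition of m.
   (Every positive m has such a decomposition, so the default values of the
   empty max / min, 0 and m, are never used for m >= 1.) *)
Definition kmax (m : nat) : nat := \max_(S : {set 'I_m} | FQ_dec S) #|S|.
Definition kmin (m : nat) : nat := \big[minn/m]_(S : {set 'I_m} | FQ_dec S) #|S|.

From Stdlib Require Import Reals Lra.
From HB Require Import structures.
From mathcomp Require Import all_boot zify.

Set Implicit Arguments.
Unset Strict Implicit.
Unset Printing Implicit Defensive.

(* Write kgap m = kmax m - kmin m and give m the weight 2^-(kgap m).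
   First, q is the sequence fq with fq (n + 1) = fq n + fq (n - 4): greedy
   decompositions show that every m < fq (n + 1) is a legal sum of
   fq 1, ..., fq n, and a case analysis on the two largest indices shows that
   fq (n + 1) is not.  Prepending a summand fq a to the decompositions of
   r < fq b, where a >= b + 4, gives kgap (fq a + r) >= kgap r, and the identity
   fq (k + 16) + fq (k + 11) = fq (k + 15) + fq (k + 13) + fq (k + 6) raises
   kgap by one on a sub-block of length fq (k + 2).  Hence the total weight
   W k of [0, fq k) satisfies a linear recurrence whose rate 661/500 is below
   the growth rate 1.3247... of fq.  The block [fq n, fq (n + 1)) has length
   fq (n - 4), and its integers m with kgap m < log2 n have weight more than
   1/n, so there are at most n W (n - 4) = O(n (661/662)^n fq (n - 4)) of them;
   thus C = 1 / ln 2 works. *)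

(** * The recurrence *)

(* The first branch reads fq (u + 5) = fq (u + 4) + fq u for u >= 2.  Indices
   are written [c + k] below, so that [fq (c + k)] unfolds by computation. *)
Fixpoint fq (n : nat) : nat :=
  match n with
  | ((_.+2 as u).+4 as n').+1 => fq n' + fq u
  | _ => nth 0 [:: 0; 1; 2; 3; 4; 5; 7] n
  end.

Lemma fqS7 k : fq (7 + k) = fq (6 + k) + fq (2 + k).
Proof. by []. Qed.

Lemma fqS5 k : fq (5 + k) = fq (3 + k) + fq (2 + k).
Proof.
elim/ltn_ind: k => -[|[|[|[|[|k]]]]] IH //.
change (fq (10 + k) = fq (8 + k) + fq (7 + k)).
have : fq (9 + k) = fq (7 + k) + fq (6 + k) := IH (4 + k) ltac:(lia).
have : fq (5 + k) = fq (3 + k) + fq (2 + k) := IH k ltac:(lia).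
have : fq (10 + k) = fq (9 + k) + fq (5 + k) := fqS7 (3 + k).
have : fq (8 + k) = fq (7 + k) + fq (3 + k) := fqS7 (1 + k).
by have := fqS7 k; lia.
Qed.

Lemma fq_ltS n : fq n < fq n.+1.
Proof.
elim/ltn_ind: n => -[|[|[|[|[|[|n]]]]]] IH //.
change (fq (6 + n) < fq (7 + n)).
have : fq (1 + n) < fq (2 + n) := IH (1 + n) ltac:(lia).
have := fqS7 n; lia.
Qed.

Lemma leq_fq : {mono fq : m n / m <= n}.
Proof. exact/leq_mono/(homo_ltn ltn_trans fq_ltS). Qed.

Lemma ltn_fq : {mono fq : m n / m < n}.
Proof. exact: leqW_mono leq_fq. Qed.

Lemma fq_ge n : n <= fq n.
Proof. by elim: n => // n IH; apply: leq_ltn_trans IH (fq_ltS n). Qed.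

Lemma fq_gt0 n : 0 < fq n.+1.
Proof. exact: leq_trans (fq_ge n.+1). Qed.

Lemma fq_rec n : 6 <= n -> fq n.+1 = fq n + fq (n - 4).
Proof. by case: n => [|[|[|[|[|[|n]]]]]] //= _; rewrite subn4. Qed.

Lemma fq_rec_alt n : 4 <= n -> fq n.+1 = fq (n - 1) + fq (n - 2).
Proof.
move=> n_ge4; have [k ->] : exists k, n = 4 + k by exists (n - 4); lia.
have -> : 4 + k - 1 = 3 + k by lia.
have -> : 4 + k - 2 = 2 + k by lia.
exact: fqS5.
Qed.

Lemma fq_rec_split n : 9 <= n -> fq n.+1 = fq (n - 1) + fq (n - 3) + fq (n - 7).
Proof.
move=> n_ge9; have [k ->] : exists k, n = 9 + k by exists (n - 9); lia.
have -> : 9 + k - 1 = 8 + k by lia.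
have -> : 9 + k - 3 = 6 + k by lia.
have -> : 9 + k - 7 = 2 + k by lia.
change (fq (10 + k) = fq (8 + k) + fq (6 + k) + fq (2 + k)).
have : fq (10 + k) = fq (8 + k) + fq (7 + k) := fqS5 (5 + k).
by have := fqS7 k; lia.
Qed.

Lemma fq_exchange k : fq (12 + k) + fq (7 + k) = fq (11 + k) + fq (9 + k) + fq (2 + k).
Proof.
have : fq (12 + k) = fq (11 + k) + fq (7 + k) := fqS7 (5 + k).
have : fq (9 + k) = fq (8 + k) + fq (4 + k) := fqS7 (2 + k).
have : fq (8 + k) = fq (7 + k) + fq (3 + k) := fqS7 (1 + k).
have : fq (6 + k) = fq (4 + k) + fq (3 + k) := fqS5 (1 + k).
by have := fqS7 k; lia.
Qed.

Lemma fq_top3_lt k : fq k + fq (k - 2) + fq (k - 4) < fq (3 + k).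
Proof.
case: (leqP 6 k) => [k_ge6 | ]; last by case: k => [|[|[|[|[|[|]]]]]].
have [j ->] : exists j, k = 6 + j by exists (k - 6); lia.
have -> : 6 + j - 2 = 4 + j by lia.
have -> : 6 + j - 4 = 2 + j by lia.
change (fq (6 + j) + fq (4 + j) + fq (2 + j) < fq (9 + j)).
have : fq (9 + j) = fq (8 + j) + fq (4 + j) := fqS7 (2 + j).
have : fq (8 + j) = fq (7 + j) + fq (3 + j) := fqS7 (1 + j).
have : fq (7 + j) = fq (6 + j) + fq (2 + j) := fqS7 j.
have : 0 < fq (3 + j) := fq_gt0 (2 + j).
lia.
Qed.

Lemma fq_le_double n : fq n.+2 <= (fq n.+1).*2.
Proof.
have [n_ge5 | ] := leqP 5 n; last by case: n => [|[|[|[|[|]]]]].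
by rewrite fq_rec // -addnn leq_add2l leq_fq; lia.
Qed.

(** * Legal decompositions *)

Definition fq_sum (L : seq nat) : nat := \sum_(i <- L) fq i.

Lemma fq_sum_nil : fq_sum [::] = 0.
Proof. exact: big_nil. Qed.

Lemma fq_sum_cons a L : fq_sum (a :: L) = fq a + fq_sum L.
Proof. exact: big_cons. Qed.

Lemma fq_sum_perm L1 L2 : perm_eq L1 L2 -> fq_sum L1 = fq_sum L2.
Proof. exact: perm_big. Qed.

Lemma fq_sum_mem L a : a \in L -> fq a <= fq_sum L.
Proof.
by elim: L => // b L IH; rewrite inE fq_sum_cons => /predU1P [-> | /IH]; lia.
Qed.

Section Legal.
Variable L : seq nat.
Hypothesis legalL : FQ_legal L.

Lemma legal_uniq : uniq L.
Proof. by case/and4P: legalL. Qed.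

Lemma legal_gt0 i : i \in L -> 0 < i.
Proof. by case/and4P: legalL => _ /allP + _ _; apply. Qed.

Lemma legal_gap a b : a \in L -> b \in L -> b < a -> a = 2 + b \/ 5 + b <= a.
Proof.
case/and4P: legalL => _ _ /allP pairL _ aL bL ltba.
have /allP/(_ b bL) := pairL a aL.
rewrite /ndist !inE (gtn_eqF ltba) /=; lia.
Qed.

Lemma legal_not13 : ~~ ((1 \in L) && (3 \in L)).
Proof. by case/and4P: legalL. Qed.

Lemma legal_subset L' : uniq L' -> {subset L' <= L} -> FQ_legal L'.
Proof.
case/and4P: legalL => _ /allP posL /allP pairL not13 uL' subL'.
apply/and4P; split => //.
- by apply/allP => i /subL' /posL.
- by apply/allP => a /subL' aL; apply/allP => b /subL'; apply: (allP (pairL a aL)).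
- by apply: contra not13 => /andP [/subL' -> /subL' ->].
Qed.

Lemma legal_nil : {in L, forall i, i <= 0} -> L = [::].
Proof.
case: L legal_gt0 => // i L' gt0 le0.
by have := gt0 i (mem_head _ _); have := le0 i (mem_head _ _); lia.
Qed.

Lemma legal_rem a : a \in L ->
  [/\ FQ_legal (rem a L), fq_sum L = fq a + fq_sum (rem a L)
    & forall i, i \in rem a L = (i != a) && (i \in L)].
Proof.
move=> aL; have memR := mem_rem_uniq a legal_uniq.
split => [||i]; last by rewrite memR inE.
- by apply: legal_subset (rem_uniq _ legal_uniq) _ => i; rewrite memR => /andP [].
- by rewrite -fq_sum_cons; apply/fq_sum_perm/perm_to_rem.
Qed.

End Legal.

Lemma legal_perm L1 L2 : perm_eq L1 L2 -> FQ_legal L1 = FQ_legal L2.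
Proof.
move=> pL; apply/idP/idP => legal; apply: (legal_subset legal).
- by rewrite -(perm_uniq pL) legal_uniq.
- by move=> i; rewrite (perm_mem pL).
- by rewrite (perm_uniq pL) legal_uniq.
- by move=> i; rewrite (perm_mem pL).
Qed.

Lemma legal_cons a L : FQ_legal L -> 0 < a -> a \notin [:: 1; 3] ->
  {in L, forall b, ndist a b \notin [:: 0; 1; 3; 4]} -> FQ_legal (a :: L).
Proof.
case/and4P => uL /allP posL /allP pairL not13 a_gt0 a13 gapL.
have aL : a \notin L by apply/negP => /gapL; rewrite /ndist !subnn.
apply/and4P; split.
- by rewrite /= aL.
- by rewrite /= a_gt0; apply/allP.
- apply/allP => x /predU1P [-> | xL]; apply/allP => y /predU1P [-> | yL].
  + by rewrite eqxx.
  + by move: (gapL y yL); rewrite /ndist !inE; lia.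
  + by move: (gapL x xL); rewrite /ndist !inE; lia.
  + exact: (allP (pairL x xL)).
- by move: a13; rewrite !inE !negb_or => /andP [/negPf a1 /negPf a3]; rewrite !(eq_sym _ a) a1 a3.
Qed.

Lemma legal_cons_far a L : FQ_legal L -> 5 <= a -> {in L, forall i, 5 + i <= a} ->
  FQ_legal (a :: L).
Proof.
move=> legalL a_ge5 farL; apply: legal_cons => //; [lia | rewrite !inE; lia |].
by move=> b /farL; rewrite /ndist !inE; lia.
Qed.

Lemma legal_top_cases L k : FQ_legal L -> k \in L -> {in L, forall i, i <= k} ->
  exists2 R, FQ_legal R &
    (fq_sum L = fq k + fq_sum R /\ {in R, forall i, 5 + i <= k}) \/
    [/\ k - 2 \in L, fq_sum L = fq k + fq (k - 2) + fq_sum R & {in R, forall i, 7 + i <= k}].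
Proof.
move=> legalL kL leL.
have [legalR sumL memR] := legal_rem legalL kL.
have below i : i \in rem k L -> 2 + i = k \/ 5 + i <= k.
  rewrite memR => /andP [ik iL].
  have ltik : i < k by rewrite ltn_neqAle ik leL.
  by case: (legal_gap legalL kL iL ltik); lia.
have [k2R | k2NR] := boolP (k - 2 \in rem k L); last first.
  exists (rem k L) => //; left; split => // i iR.
  case: (below i iR) => // ik.
  have ik2 : k - 2 = i by lia.
  by move: k2NR; rewrite ik2 iR.
have [legalR' sumR memR'] := legal_rem legalR k2R.
exists (rem (k - 2) (rem k L)) => //; right; split.
- by move: k2R; rewrite memR => /andP [].
- by rewrite sumL sumR addnA.
move=> i; rewrite memR' => /andP [ik2 iR].
have k2L : k - 2 \in L by move: k2R; rewrite memR => /andP [].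
have iL : i \in L by move: iR; rewrite memR => /andP [].
have := below i iR; have := below _ k2R.
case: (ltnP i (k - 2)) => [lt_i | ge_i]; last by move: ik2; lia.
by case: (legal_gap legalL k2L iL lt_i); lia.
Qed.

Lemma leq_pred_notin (L : seq nat) k : {in L, forall i, i <= k} -> k \notin L ->
  {in L, forall i, i <= k - 1}.
Proof.
move=> leL kNL i iL; move: (leL i iL); rewrite leq_eqVlt => /predU1P [ik | ]; last lia.
by move: kNL; rewrite -ik iL.
Qed.

Lemma legal_fq_sum_lt L k : FQ_legal L -> {in L, forall i, i <= k} -> fq_sum L < fq (3 + k).
Proof.
elim/ltn_ind: k L => k IH L legalL leL.
have [kL | kNL] := boolP (k \in L); last first.
  case: k IH leL kNL => [|k] IH leL kNL.
    by rewrite (legal_nil legalL leL) fq_sum_nil.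
  have leL' := leq_pred_notin leL kNL; rewrite subn1 /= in leL'.
  by apply: leq_trans (IH k (ltnSn k) L legalL leL') _; rewrite ltnW // ltn_fq addnS.
have tail d R : FQ_legal R -> {in R, forall i, 3 + d + i <= k} -> fq_sum R <= fq (k - d).
  move=> legalR leR; case: (ltnP k (3 + d)) => [lt_k | le_k].
    by rewrite (legal_nil legalR) ?fq_sum_nil // => i /leR; lia.
  have le_R : {in R, forall i, i <= k - (3 + d)} by move=> i /leR; lia.
  have -> : k - d = 3 + (k - (3 + d)) by lia.
  by apply/ltnW/(IH _ _ _ legalR le_R); lia.
have := fq_top3_lt k.
case: (legal_top_cases legalL kL leL) => R legalR [[-> leR] | [_ -> leR]].
- by have := tail 2 R legalR leR; lia.
- by have := tail 4 R legalR leR; lia.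
Qed.

Section NotRepresentable.
Variable n : nat.
Hypothesis IHn : forall m, m < n ->
  forall L, FQ_legal L -> {in L, forall i, i <= m} -> fq_sum L != fq m.+1.

Let tail d R : d < n -> FQ_legal R -> {in R, forall i, 1 + d + i <= n} ->
  fq_sum R != fq (n - d).
Proof.
move=> lt_dn legalR leR; have -> : n - d = (n - d - 1).+1 by lia.
by apply: IHn legalR _ => [|i /leR]; lia.
Qed.

Let nil_below c R : FQ_legal R -> {in R, forall i, c + i <= n} -> n <= c -> R = [::].
Proof. by move=> legalR leR le_nc; apply: legal_nil legalR _ => i /leR; lia. Qed.

Lemma legal_fq_sum_neq_top L : FQ_legal L -> n \in L -> {in L, forall i, i <= n} ->
  fq_sum L != fq n.+1.
Proof.
move=> legalL nL leL.
case: (legal_top_cases legalL nL leL) => R legalR [[-> leR] | [n2L -> _]].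
  case: (leqP 6 n) => [n_ge6 | n_lt6].
    by rewrite fq_rec // eqn_add2l; apply: tail legalR _ => //; lia.
  by rewrite (nil_below legalR leR) ?fq_sum_nil ?addn0 ?neq_ltn ?fq_ltS //; lia.
have n_ge3 : 3 <= n by have := legal_gt0 legalL n2L; lia.
case: (leqP 4 n) => [n_ge4 | n_lt4].
  have : fq (n - 1) < fq n by rewrite ltn_fq; lia.
  by have := fq_rec_alt n_ge4; lia.
have n3 : n = 3 by lia.
have := legal_not13 legalL; rewrite n3 in nL n2L.
by rewrite nL n2L.
Qed.

Lemma legal_fq_sum_neq_subtop L : FQ_legal L -> n - 1 \in L -> {in L, forall i, i <= n - 1} ->
  fq_sum L != fq n.+1.
Proof.
move=> legalL n1L leL; have n_ge2 : 2 <= n by have := legal_gt0 legalL n1L; lia.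
case: (legal_top_cases legalL n1L leL) => R legalR; rewrite -subnDA.
case=> [[-> leR] | [n3L -> leR]].
  have [n_ge6 | n_lt6] := leqP 6 n; last first.
    have -> : R = [::] by apply: (nil_below (c := 6) legalR) => [i /leR|]; lia.
    by rewrite fq_sum_nil addn0 neq_ltn ltn_fq; lia.
  have : fq_sum R < fq (n - 3).
    have -> : n - 3 = 3 + (n - 6) by lia.
    by apply: legal_fq_sum_lt legalR _ => i /leR; lia.
  have : fq (n - 3) <= fq (n - 2) by rewrite leq_fq; lia.
  by have := @fq_rec_alt n ltac:(lia); lia.
have n_ge4 : 4 <= n by have := legal_gt0 legalL n3L; lia.
have [n_ge9 | n_lt9] := leqP 9 n.
  by rewrite fq_rec_split // eqn_add2l; apply: tail legalR _ => [|i /leR]; lia.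
have -> : R = [::] by apply: (nil_below (c := 8) legalR) => [i /leR|]; lia.
rewrite fq_sum_nil addn0.
have : n \in [:: 4; 5; 6; 7; 8] by rewrite !inE; lia.
by rewrite !inE => /or4P [| | |/orP []] /eqP ->.
Qed.

End NotRepresentable.

Lemma legal_fq_sum_neq L n : FQ_legal L -> {in L, forall i, i <= n} -> fq_sum L != fq n.+1.
Proof.
elim/ltn_ind: n L => n IHn L legalL leL.
have [nL | nNL] := boolP (n \in L); first exact: legal_fq_sum_neq_top.
have leL1 := leq_pred_notin leL nNL.
have [n1L | n1NL] := boolP (n - 1 \in L); first exact: legal_fq_sum_neq_subtop.
have leL2 := leq_pred_notin leL1 n1NL; rewrite -subnDA in leL2.
have [n_ge2 | n_lt2] := leqP 2 n.
  have := legal_fq_sum_lt legalL leL2; rewrite (_ : 3 + (n - 2) = n.+1); last lia.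
  by rewrite neq_ltn => ->.
by rewrite (legal_nil legalL) ?fq_sum_nil ?neq_ltn ?fq_gt0 // => i /leL2; lia.
Qed.

Lemma fq_sum_index_lt L n : fq_sum L < fq n -> {in L, forall i, i < n}.
Proof. by move=> lt_Ln i /fq_sum_mem le_iL; rewrite -ltn_fq (leq_ltn_trans le_iL). Qed.

Lemma legal_decomp_exists m : exists2 L, FQ_legal L & fq_sum L = m.
Proof.
suff: forall n m, m < fq n.+1 -> exists2 L, FQ_legal L & fq_sum L = m.
  by apply; apply: leq_ltn_trans (fq_ge m) (fq_ltS m).
elim/ltn_ind=> n IHn {}m lt_m.
have [n_ge6 | n_lt6] := leqP 6 n; last first.
  have : m < 7 by apply: leq_trans lt_m _; rewrite -[7]/(fq 6) leq_fq.
  case: m {lt_m} => [|[|[|[|[|[|[|m]]]]]]] // _;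
    [exists [::] | exists [:: 1] | exists [:: 2] | exists [:: 3] | exists [:: 4]
    | exists [:: 5] | exists [:: 4; 2]]; by rewrite /fq_sum ?unlock.
have [lt_mn | le_nm] := ltnP m (fq n).
  by apply: (IHn n.-1); rewrite ?prednK //; lia.
have lt_r : m - fq n < fq (n - 5).+1.
  by move: lt_m; rewrite fq_rec // (_ : (n - 5).+1 = n - 4); lia.
have [L legalL sumL] := IHn (n - 5) ltac:(lia) _ lt_r.
have ltL : {in L, forall i, i < n - 4}.
  by apply: fq_sum_index_lt; rewrite sumL; move: lt_m; rewrite fq_rec //; lia.
exists (n :: L); last by rewrite fq_sum_cons sumL; lia.
by apply: legal_cons_far legalL _ _ => [|i /ltL]; lia.
Qed.

(** * The Fibonacci Quilt sequence is [fq] *)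

Section IndexSets.
Variable N : nat.

Lemma big_idx_of (S : {set 'I_N}) (F : nat -> nat) :
  \sum_(j in S) F (val j).+1 = \sum_(i <- idx_of S) F i.
Proof. by rewrite /idx_of big_map big_enum. Qed.

Lemma idx_of_bound (S : {set 'I_N}) i : i \in idx_of S -> 0 < i <= N.
Proof. by case/mapP => j _ ->; rewrite ltn_ord. Qed.

Lemma size_idx_of (S : {set 'I_N}) : size (idx_of S) = #|S|.
Proof. by rewrite /idx_of size_map cardE. Qed.

Definition set_of_idx (L : seq nat) : {set 'I_N} := [set j : 'I_N | (val j).+1 \in L].

Lemma idx_of_set_perm L : uniq L -> {in L, forall i, 0 < i <= N} ->
  perm_eq (idx_of (set_of_idx L)) L.
Proof.
move=> uL boundL; apply: uniq_perm => // [|i].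
  by rewrite map_inj_uniq ?enum_uniq // => j j' [/val_inj].
apply/mapP/idP => [[j] | iL]; first by rewrite mem_enum inE => + ->.
have /andP [i_gt0 le_iN] := boundL i iL.
have lt_iN : i.-1 < N by lia.
exists (Ordinal lt_iN); last by rewrite /= prednK.
by rewrite mem_enum inE /= prednK.
Qed.

End IndexSets.

Lemma legal_set_of_idx N L : FQ_legal L -> {in L, forall i, i <= N} ->
  [/\ FQ_legal (idx_of (set_of_idx N L)), #|set_of_idx N L| = size L &
      forall F, \sum_(j in set_of_idx N L) F (val j).+1 = \sum_(i <- L) F i].
Proof.
move=> legalL leL.
have pL : perm_eq (idx_of (set_of_idx N L)) L.
  by apply: idx_of_set_perm (legal_uniq legalL) _ => i iL; rewrite (legal_gt0 legalL) ?leL.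
split => [||F]; first by rewrite (legal_perm pL).
  by rewrite -size_idx_of (perm_size pL).
by rewrite big_idx_of (perm_big _ pL).
Qed.

Lemma nth_fq_list n i : 0 < i <= n -> nth 0 (map fq (iota 1 n)) i.-1 = fq i.
Proof.
by move=> /andP [i_gt0 le_in]; rewrite (nth_map 0) ?size_iota ?nth_iota ?add1n ?prednK //; lia.
Qed.

Lemma has_decomp_fq n m : has_decomp (map fq (iota 1 n)) m <->
  exists2 L, FQ_legal L & {in L, forall i, i <= n} /\ fq_sum L = m.
Proof.
set s := map fq (iota 1 n); have size_s : size s = n by rewrite size_map size_iota.
have sum_s L : {in L, forall i, 0 < i <= n} -> \sum_(i <- L) nth 0 s i.-1 = fq_sum L.
  by move=> boundL; rewrite /fq_sum big_seq_cond [RHS]big_seq_cond;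
     apply: eq_bigr => i /andP [/boundL ? _]; apply: nth_fq_list.
split => [/existsP [S /andP [legalS /eqP sumS]] | [L legalL [leL sumL]]].
  have boundS i : i \in idx_of S -> 0 < i <= n by rewrite -size_s; apply: idx_of_bound.
  exists (idx_of S) => //; split => [i /boundS /andP [] //|].
  by rewrite -sum_s // -sumS (big_idx_of S (fun i => nth 0 s i.-1)).
rewrite -size_s in leL.
have [legalS _ sumS] := legal_set_of_idx legalL leL.
apply/existsP; exists (set_of_idx (size s) L); rewrite legalS /=.
rewrite (sumS (fun i => nth 0 s i.-1)) sum_s ?sumL // => i iL.
by rewrite (legal_gt0 legalL) // -size_s leL.
Qed.

Lemma FQ_next_least s x : 0 < x <= (sumn s).+1 -> ~~ has_decomp s x ->
  (forall m, 0 < m < x -> has_decomp s m) -> FQ_next s = x.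
Proof.
move=> /andP [x_gt0 le_x] xN lt_x; rewrite /FQ_next.
rewrite (_ : (sumn s).+1 = x.-1 + ((sumn s).+2 - x)); last lia.
rewrite iotaD filter_cat (eq_in_filter (a2 := pred0)) ?filter_pred0 => [|m]; last first.
  by rewrite mem_iota => /andP [m_gt0 lt_m] /=; rewrite lt_x //; lia.
rewrite (_ : (sumn s).+2 - x = ((sumn s).+1 - x).+1); last lia.
by rewrite add1n prednK //= xN.
Qed.

Lemma iota1S n : iota 1 n.+1 = rcons (iota 1 n) n.+1.
Proof. by rewrite -cats1 -[n.+1]addn1 iotaD add1n addn1. Qed.

Lemma fq_le_sum n : fq n.+1 <= (sumn (map fq (iota 1 n))).+1.
Proof.
elim: n => // n IH; rewrite iota1S map_rcons sumn_rcons.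
by apply: leq_trans (fq_le_double n) _; rewrite -addnn; lia.
Qed.

Lemma FQ_list_fq n : FQ_list n = map fq (iota 1 n).
Proof.
elim: n => // n IH; rewrite iota1S map_rcons -IH /=; congr rcons; rewrite IH.
apply: FQ_next_least => [|| m /andP [_ lt_m]].
- by rewrite fq_gt0 fq_le_sum.
- apply/negP => /has_decomp_fq [L legalL [leL sumL]].
  by move/eqP: sumL; apply/negP/legal_fq_sum_neq.
- have [L legalL sumL] := legal_decomp_exists m.
  apply/has_decomp_fq; exists L => //; split=> // i /(fq_sum_index_lt (n := n.+1)); apply.
  by rewrite sumL.
Qed.

Lemma q_fq n : q n = fq n.
Proof. by rewrite /q FQ_list_fq; case: n => // n; rewrite iota1S map_rcons last_rcons. Qed.

(** * Extremal numbers of summands *)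

Lemma FQ_dec_set_of_idx m L : FQ_legal L -> fq_sum L = m ->
  FQ_dec (set_of_idx m L) /\ #|set_of_idx m L| = size L.
Proof.
move=> legalL sumL.
have leL : {in L, forall i, i <= m}.
  by move=> i /fq_sum_mem; rewrite sumL; apply: leq_trans (fq_ge i).
have [legalS cardS sumS] := legal_set_of_idx legalL leL.
split => //; rewrite /FQ_dec legalS (sumS q) /=.
by rewrite -sumL /fq_sum; apply/eqP/eq_bigr => i _; rewrite q_fq.
Qed.

Lemma FQ_dec_idx_of m (S : {set 'I_m}) : FQ_dec S ->
  [/\ FQ_legal (idx_of S), fq_sum (idx_of S) = m & size (idx_of S) = #|S|].
Proof.
case/andP => legalS /eqP sumS; split => //; last exact: size_idx_of.
by rewrite -[RHS]sumS big_idx_of /fq_sum; apply: eq_bigr => i _; rewrite q_fq.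
Qed.

Lemma kmax_ge m L : FQ_legal L -> fq_sum L = m -> size L <= kmax m.
Proof. by move=> legalL /(FQ_dec_set_of_idx legalL) [decS <-]; apply: leq_bigmax_cond. Qed.

Lemma geq_bigmin_cond (I : finType) (P : pred I) (F : I -> nat) x0 i :
  P i -> \big[minn/x0]_(j | P j) F j <= F i.
Proof.
move=> Pi; rewrite -big_filter.
have : i \in [seq j <- index_enum I | P j] by rewrite mem_filter Pi mem_index_enum.
elim: [seq _ <- _ | _] => // j r IH; rewrite inE big_cons => /predU1P [<- | /IH].
  exact: geq_minl.
exact: leq_trans (geq_minr _ _).
Qed.

Lemma kmin_le m L : FQ_legal L -> fq_sum L = m -> kmin m <= size L.
Proof.
by move=> legalL /(FQ_dec_set_of_idx legalL) [decS <-]; apply: geq_bigmin_cond.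
Qed.

Lemma kmax_witness m : exists2 L, FQ_legal L & fq_sum L = m /\ size L = kmax m.
Proof.
have [L0 legalL0 /(FQ_dec_set_of_idx legalL0) [decS0 _]] := legal_decomp_exists m.
rewrite /kmax (bigmax_eq_arg _ decS0); case: arg_maxnP => // S decS _.
by have [] := FQ_dec_idx_of decS; exists (idx_of S).
Qed.

Lemma kmin_witness m : exists2 L, FQ_legal L & fq_sum L = m /\ size L = kmin m.
Proof.
have [L0 legalL0 /(FQ_dec_set_of_idx legalL0) [decS0 _]] := legal_decomp_exists m.
case: (arg_minnP (fun S : {set 'I_m} => #|S|) decS0) => S decS minS.
have [legalS sumS sizeS] := FQ_dec_idx_of decS.
exists (idx_of S) => //; split => //; apply/eqP; rewrite eqn_leq kmin_le //=.
rewrite sizeS andbT /kmin; apply: (big_ind (fun x => #|S| <= x)) => [|x y|]; last exact: minS.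
- by rewrite -[m in _ <= m]card_ord max_card.
- by rewrite leq_min => -> ->.
Qed.

Lemma kmin_le_kmax m : kmin m <= kmax m.
Proof.
have [L legalL sumL] := legal_decomp_exists m.
exact: leq_trans (kmin_le legalL sumL) (kmax_ge legalL sumL).
Qed.

Lemma legal_cons_below a b L : FQ_legal L -> fq_sum L < fq b -> 4 + b <= a ->
  FQ_legal (a :: L).
Proof.
move=> legalL ltL le_ba; have b_gt0 : 0 < b by case: b ltL {le_ba}.
by apply: legal_cons_far legalL _ _ => [|i /(fq_sum_index_lt ltL)]; lia.
Qed.

Definition kgap (m : nat) : nat := kmax m - kmin m.

Lemma kgap_cons a b r : 4 + b <= a -> r < fq b -> kgap r <= kgap (fq a + r).
Proof.
move=> le_ba lt_r.
have [Lx legalLx [sumLx sizeLx]] := kmax_witness r.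
have [Ln legalLn [sumLn sizeLn]] := kmin_witness r.
have cons_decomp L : FQ_legal L -> fq_sum L = r ->
    FQ_legal (a :: L) /\ fq_sum (a :: L) = fq a + r.
  move=> legalL sumL; split; last by rewrite fq_sum_cons sumL.
  by apply: legal_cons_below legalL _ le_ba; rewrite sumL.
have [legalx sumx] := cons_decomp _ legalLx sumLx.
have [legaln sumn] := cons_decomp _ legalLn sumLn.
have : (size Lx).+1 <= kmax (fq a + r) := kmax_ge legalx sumx.
have : kmin (fq a + r) <= (size Ln).+1 := kmin_le legaln sumn.
by rewrite /kgap -sizeLx -sizeLn; lia.
Qed.

(* [fq_exchange] trades the two summands 16 + k, 11 + k of a smallest
   decomposition for the three summands 15 + k, 13 + k, 6 + k. *)
Lemma kgap_exchange k r : r < fq (2 + k) ->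
  (kgap r).+1 <= kgap (fq (16 + k) + fq (11 + k) + r).
Proof.
move=> lt_r.
have [Lx legalLx [sumLx sizeLx]] := kmax_witness r.
have [Ln legalLn [sumLn sizeLn]] := kmin_witness r.
have fq12 : fq (12 + k) = fq (11 + k) + fq (7 + k) := fqS7 (5 + k).
have fq7 : fq (7 + k) = fq (6 + k) + fq (2 + k) := fqS7 k.
have below2 a L : FQ_legal L -> fq_sum L = r -> 6 + k <= a -> FQ_legal (a :: L).
  by move=> legalL sumL le_a; apply: (legal_cons_below (b := 2 + k)) legalL _ _; rewrite ?sumL.
have legaln : FQ_legal [:: 16 + k, 11 + k & Ln].
  apply: (legal_cons_below (b := 12 + k)) (below2 _ _ legalLn sumLn _) _ _; try lia.
  by rewrite fq_sum_cons sumLn; lia.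
have legalx : FQ_legal [:: 15 + k, 13 + k, 6 + k & Lx].
  have legal13 : FQ_legal [:: 13 + k, 6 + k & Lx].
    apply: (legal_cons_below (b := 7 + k)) (below2 _ _ legalLx sumLx _) _ _; try lia.
    by rewrite fq_sum_cons sumLx; lia.
  have ltLx : {in Lx, forall i, i < 2 + k} by apply: fq_sum_index_lt; rewrite sumLx.
  apply: legal_cons legal13 _ _ _ => // i.
  rewrite !inE => /predU1P [-> | /predU1P [-> | /ltLx]]; rewrite /ndist ?inE; lia.
have exch : fq (16 + k) + fq (11 + k) = fq (15 + k) + fq (13 + k) + fq (6 + k).
  exact: fq_exchange (4 + k).
have sumx : fq_sum [:: 15 + k, 13 + k, 6 + k & Lx] = fq (16 + k) + fq (11 + k) + r.
  by rewrite !fq_sum_cons sumLx; lia.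
have sumn : fq_sum [:: 16 + k, 11 + k & Ln] = fq (16 + k) + fq (11 + k) + r.
  by rewrite !fq_sum_cons sumLn; lia.
have : (size Lx).+3 <= kmax (fq (16 + k) + fq (11 + k) + r) := kmax_ge legalx sumx.
have : kmin (fq (16 + k) + fq (11 + k) + r) <= (size Ln).+2 := kmin_le legaln sumn.
by have := kmin_le_kmax r; rewrite /kgap -sizeLx -sizeLn; lia.
Qed.

(** * Weights *)

Local Open Scope R_scope.
(* [zify] loads [ssralg], whose [ring_scope] takes over the key [%R]. *)
Delimit Scope R_scope with R.

Lemma Rplus_associative : associative Rplus.
Proof. by move=> x y z; rewrite Rplus_assoc. Qed.

HB.instance Definition _ :=
  Monoid.isComLaw.Build R 0 Rplus Rplus_associative Rplus_comm Rplus_0_l.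

Section RealSums.
Variable T : eqType.
Implicit Types (s : seq T) (f g : T -> R).

Lemma Rsum_le s f g : {in s, forall i, f i <= g i} ->
  \big[Rplus/0]_(i <- s) f i <= \big[Rplus/0]_(i <- s) g i.
Proof.
move=> le_fg; rewrite big_seq_cond [X in _ <= X]big_seq_cond.
by apply: (big_ind2 Rle) => [|x1 x2 y1 y2|i /andP [/le_fg]] //; [lra | lra].
Qed.

Lemma Rsum_ge0 s f : (forall i, 0 <= f i) -> 0 <= \big[Rplus/0]_(i <- s) f i.
Proof. by move=> f_ge0; apply: big_ind => [|x y|i _]; [lra | lra | apply: f_ge0]. Qed.

Lemma Rsum_scal c s f : \big[Rplus/0]_(i <- s) (c * f i) = c * \big[Rplus/0]_(i <- s) f i.
Proof. by apply: (big_ind2 (fun x y => x = c * y)) => [|x1 x2 y1 y2 -> ->|] //; lra. Qed.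

Lemma Rsum_le_size s f : (forall i, f i <= 1) -> \big[Rplus/0]_(i <- s) f i <= INR (size s).
Proof.
move=> f_le1; elim: s => [|i s IH]; first by rewrite big_nil /=; lra.
by rewrite big_cons [size _]/= S_INR; have := f_le1 i; lra.
Qed.

Lemma count_le_Rsum (P : pred T) s g : (forall i, 0 <= g i) -> (forall i, P i -> 1 <= g i) ->
  INR (count P s) <= \big[Rplus/0]_(i <- s) g i.
Proof.
move=> g_ge0 g_ge1; elim: s => [|i s IH]; first by rewrite big_nil /=; lra.
rewrite big_cons /= plus_INR; case: (boolP (P i)) => [/g_ge1 | _] /=; first lra.
by have := g_ge0 i; lra.
Qed.

End RealSums.

Definition weight (m : nat) : R := / 2 ^ kgap m.

Definition wsum (a n : nat) : R := \big[Rplus/0]_(m <- iota a n) weight m.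

Definition wfq (k : nat) : R := wsum 0 (fq k).

Lemma weight_ge0 m : 0 <= weight m.
Proof. by apply/Rlt_le/Rinv_0_lt_compat/pow_lt; lra. Qed.

Lemma inv_pow2_anti k k' : (k <= k')%N -> / 2 ^ k' <= / 2 ^ k.
Proof.
move=> le_kk'; apply: Rinv_le_contravar; first by apply: pow_lt; lra.
by apply: Rle_pow; [lra | apply/leP].
Qed.

Lemma weight_le1 m : weight m <= 1.
Proof. by rewrite -Rinv_1; apply: Rinv_le_contravar; [lra | apply: pow_R1_Rle; lra]. Qed.

Lemma wsum_cat a n1 n2 : wsum a (n1 + n2) = wsum a n1 + wsum (a + n1) n2.
Proof. by rewrite /wsum iotaD big_cat. Qed.

Lemma wsum_shift a n : wsum a n = \big[Rplus/0]_(r <- iota 0 n) weight (a + r).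
Proof. by rewrite /wsum -[a in iota a]addn0 iotaDl big_map. Qed.

Lemma wsum_le_shift a b n : (forall r, (r < n)%N -> (kgap (b + r) <= kgap (a + r))%N) ->
  wsum a n <= wsum b n.
Proof.
move=> le_ab; rewrite !wsum_shift; apply: Rsum_le => r.
by rewrite mem_iota add0n => /andP [_ /le_ab /inv_pow2_anti].
Qed.

Lemma wsum_le_half_shift a b n :
  (forall r, (r < n)%N -> ((kgap (b + r)).+1 <= kgap (a + r))%N) ->
  wsum a n <= / 2 * wsum b n.
Proof.
move=> lt_ab; rewrite !wsum_shift -Rsum_scal; apply: Rsum_le => r.
rewrite mem_iota add0n => /andP [_ /lt_ab /inv_pow2_anti].
by rewrite /= Rinv_mult.
Qed.

Lemma wsum_ge0 a n : 0 <= wsum a n.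
Proof. exact/Rsum_ge0/weight_ge0. Qed.

Lemma wsum_le_len a n : wsum a n <= INR n.
Proof. by rewrite /wsum -[n in INR n](size_iota a); apply/Rsum_le_size/weight_le1. Qed.

Lemma wsum_cons_le a b c n : (4 + b <= a)%N -> (c + n <= fq b)%N ->
  wsum (fq a + c) n <= wsum c n.
Proof.
move=> le_ba le_cn; apply: wsum_le_shift => r lt_rn.
by rewrite -addnA; apply: kgap_cons le_ba _; lia.
Qed.

Lemma wfq_step k : wfq (7 + k) <= wfq (6 + k) + wfq (2 + k).
Proof.
rewrite /wfq fqS7 wsum_cat add0n -[fq (6 + k)]addn0.
by have := @wsum_cons_le (6 + k) (2 + k) 0 (fq (2 + k)) (leqnn _) (leqnn _); lra.
Qed.

Lemma wfq_exchange k :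
  wfq (17 + k) + / 2 * wfq (2 + k) <= wfq (16 + k) + wfq (11 + k) + wfq (7 + k).
Proof.
have fq17 : (fq (17 + k) = fq (16 + k) + (fq (11 + k) + (fq (2 + k) + fq (6 + k))))%N.
  by rewrite (fqS7 (10 + k)) (fqS7 (5 + k)) (fqS7 k) [(fq (6 + k) + _)%N]addnC.
have fq7 : (fq (7 + k) = fq (2 + k) + fq (6 + k))%N by rewrite fqS7 addnC.
rewrite /wfq fq17 fq7 (wsum_cat 0 (fq (16 + k))) (wsum_cat (0 + fq (16 + k)) (fq (11 + k)))
  (wsum_cat (0 + fq (16 + k) + fq (11 + k)) (fq (2 + k))) (wsum_cat 0 (fq (2 + k)))
  !(add0n (fq _)).
have block11 : wsum (fq (16 + k)) (fq (11 + k)) <= wsum 0 (fq (11 + k)).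
  rewrite -[fq (16 + k)]addn0; apply: (wsum_cons_le (b := 12 + k)) => //.
  by rewrite leq_fq; lia.
have block2 : wsum (fq (16 + k) + fq (11 + k)) (fq (2 + k)) <= / 2 * wsum 0 (fq (2 + k)).
  by apply: wsum_le_half_shift => r lt_r; rewrite add0n; apply: kgap_exchange.
have block6 : wsum (fq (16 + k) + fq (11 + k) + fq (2 + k)) (fq (6 + k))
              <= wsum (fq (2 + k)) (fq (6 + k)).
  have fq12 : (fq (12 + k) = fq (11 + k) + fq (2 + k) + fq (6 + k))%N.
    by rewrite (fqS7 (5 + k)) fq7 addnA.
  rewrite -(addnA (fq (16 + k))).
  apply: (Rle_trans _ (wsum (fq (11 + k) + fq (2 + k)) (fq (6 + k)))).
    by apply: (wsum_cons_le (b := 12 + k)); rewrite // fq12.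
  by apply: (wsum_cons_le (b := 7 + k)); rewrite // fq7.
lra.
Qed.

Lemma wfq_rec p : wfq (21 + p) <= wfq (20 + p) + wfq (15 + p) + 3 / 2 * wfq (6 + p)
  + wfq (5 + p) + wfq (4 + p) + wfq (3 + p) + wfq (2 + p).
Proof.
have : wfq (21 + p) + / 2 * wfq (6 + p) <= wfq (20 + p) + wfq (15 + p) + wfq (11 + p)
  := wfq_exchange (4 + p).
have : wfq (11 + p) <= wfq (10 + p) + wfq (6 + p) := wfq_step (4 + p).
have : wfq (10 + p) <= wfq (9 + p) + wfq (5 + p) := wfq_step (3 + p).
have : wfq (9 + p) <= wfq (8 + p) + wfq (4 + p) := wfq_step (2 + p).
have : wfq (8 + p) <= wfq (7 + p) + wfq (3 + p) := wfq_step (1 + p).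
by have := wfq_step p; lra.
Qed.

Lemma wfq_le_fq k : wfq k <= INR (fq k).
Proof. exact: wsum_le_len. Qed.

Lemma wfq_growth k : wfq k <= INR (fq 21) * (661 / 500) ^ k.
Proof.
pose th : R := 661 / 500; rewrite -/th.
have rate : th ^ 18 + th ^ 13 + 3 / 2 * th ^ 4 + th ^ 3 + th ^ 2 + th + 1 <= th ^ 19.
  by rewrite /th /=; lra.
have th_ge1 : 1 <= th by rewrite /th; lra.
elim/ltn_ind: k => k IH.
have [k_lt21 | k_ge21] := ltnP k 21.
  have : INR (fq k) <= INR (fq 21) by apply/le_INR/leP; rewrite leq_fq ltnW.
  have : 1 <= th ^ k by apply: pow_R1_Rle.
  by have := wfq_le_fq k; have := pos_INR (fq 21); nra.
have [p kE] : exists p, k = (21 + p)%N by exists (k - 21)%N; lia.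
subst k.
have IHs i : (i < 19)%N -> wfq (i + (2 + p)) <= INR (fq 21) * (th ^ i * th ^ (2 + p)).
  by move=> lt_i; rewrite -pow_add; apply: IH; lia.
have h20 : wfq (20 + p) <= INR (fq 21) * (th ^ 18 * th ^ (2 + p)) := IHs 18%N isT.
have h15 : wfq (15 + p) <= INR (fq 21) * (th ^ 13 * th ^ (2 + p)) := IHs 13%N isT.
have h6 : wfq (6 + p) <= INR (fq 21) * (th ^ 4 * th ^ (2 + p)) := IHs 4%N isT.
have h5 : wfq (5 + p) <= INR (fq 21) * (th ^ 3 * th ^ (2 + p)) := IHs 3%N isT.
have h4 : wfq (4 + p) <= INR (fq 21) * (th ^ 2 * th ^ (2 + p)) := IHs 2%N isT.
have h3 : wfq (3 + p) <= INR (fq 21) * (th ^ 1 * th ^ (2 + p)) := IHs 1%N isT.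
have h2 : wfq (2 + p) <= INR (fq 21) * (th ^ 0 * th ^ (2 + p)) := IHs 0%N isT.
rewrite pow_1 in h3; rewrite pow_O in h2.
have T_ge0 : 0 <= INR (fq 21) * th ^ (2 + p).
  by apply: Rmult_le_pos; [apply: pos_INR | apply: pow_le; lra].
have := Rmult_le_compat_l _ _ _ T_ge0 rate.
rewrite (_ : th ^ (21 + p) = th ^ 19 * th ^ (2 + p)); last by rewrite -pow_add.
by have := wfq_rec p; lra.
Qed.

(* 661/500 < 331/250 < 1.3247..., the growth rate of [fq]; the ratio of the
   first two is 661/662. *)
Lemma fq_lower n : (0 < n)%N -> (331 / 250) ^ n <= 8 * INR (fq n).
Proof.
pose th : R := 331 / 250; rewrite -/th.
have th_ge1 : 1 <= th by rewrite /th; lra.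
have rate : th ^ 5 <= th ^ 4 + 1 by rewrite /th /=; lra.
elim/ltn_ind: n => n IH n_gt0.
have [n_le6 | n_gt6] := leqP n 6.
  have : 1 <= INR (fq n) by case: n n_gt0 {IH n_le6} => // n _; apply/(le_INR 1)/leP/fq_gt0.
  have : th ^ n <= th ^ 6 by apply: Rle_pow => //; apply/leP.
  have : th ^ 6 <= 8 by rewrite /th /=; lra.
  lra.
have [j nE] : exists j, n = (7 + j)%N by exists (n - 7)%N; lia.
subst n.
have h6 : th ^ (6 + j) <= 8 * INR (fq (6 + j)) by apply: IH; lia.
have h2 : th ^ (2 + j) <= 8 * INR (fq (2 + j)) by apply: IH; lia.
have th_ge0 : 0 <= th ^ (2 + j) by apply: pow_le; lra.
have := Rmult_le_compat_r _ _ _ th_ge0 rate.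
have -> : th ^ (7 + j) = th ^ 5 * th ^ (2 + j) by rewrite -pow_add.
have e6 : th ^ (6 + j) = th ^ 4 * th ^ (2 + j) by rewrite -pow_add.
rewrite fqS7 plus_INR; lra.
Qed.

(** * Counting and the limit *)

Definition spread_large (C : R) (n m : nat) : bool :=
  if Rle_dec (C * ln (INR n)) (INR (kmax m) - INR (kmin m)) then true else false.

Lemma ln2_gt0 : 0 < ln 2.
Proof. by rewrite -ln_1; apply: ln_increasing; lra. Qed.

Lemma weight_spread_small n m : (0 < n)%N -> ~~ spread_large (/ ln 2) n m ->
  1 <= INR n * weight m.
Proof.
rewrite /spread_large; case: Rle_dec => // small n_gt0 _.
have n_pos : 0 < INR n by apply/lt_0_INR/ltP.
have pow_pos : 0 < 2 ^ kgap m by apply: pow_lt; lra.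
have gapE : INR (kmax m) - INR (kmin m) = INR (kgap m).
  by rewrite /kgap -minus_INR //; apply/leP/kmin_le_kmax.
have : INR (kgap m) * ln 2 < ln (INR n).
  apply: Rnot_le_lt => le_n; apply: small; rewrite gapE.
  have := ln2_gt0 => ln2_pos.
  apply: (Rmult_le_reg_l (ln 2)) => //; rewrite -Rmult_assoc Rinv_r; lra.
rewrite -ln_pow; last lra.
move/(ln_lt_inv _ _ pow_pos n_pos) => lt_pow.
rewrite /weight -(Rinv_r (2 ^ kgap m)); last lra.
by apply: Rmult_le_compat_r; [apply/Rlt_le/Rinv_0_lt_compat | lra].
Qed.

Lemma count_spread_small k :
  INR (count (predC (spread_large (/ ln 2) (6 + k))) (iota (fq (6 + k)) (fq (2 + k))))
  <= INR (6 + k) * wfq (2 + k).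
Proof.
apply: Rle_trans (count_le_Rsum (g := fun m => INR (6 + k) * weight m) _ _ _) _.
- by move=> m; apply: Rmult_le_pos; [apply: pos_INR | apply: weight_ge0].
- by move=> m; apply: weight_spread_small.
rewrite Rsum_scal; apply: Rmult_le_compat_l; first exact: pos_INR.
have := @wsum_cons_le (6 + k) (2 + k) 0 (fq (2 + k)) (leqnn _) (leqnn _).
by rewrite (addn0 (fq (6 + k))).
Qed.

Lemma spread_large_fraction k :
  1 - 24 * INR (fq 21) * (INR (2 + k) * (661 / 662) ^ (2 + k))
  <= INR (count (spread_large (/ ln 2) (6 + k)) (iota (fq (6 + k)) (fq (2 + k))))
     / INR (fq (2 + k))
  <= 1.
Proof.
have wfq_le : wfq (2 + k) <= 8 * INR (fq 21) * (661 / 662) ^ (2 + k) * INR (fq (2 + k)).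
  have c_ge0 := pos_INR (fq 21).
  have rho_ge0 : 0 <= (661 / 662) ^ (2 + k) by apply: pow_le; lra.
  have := wfq_growth (2 + k).
  rewrite (_ : 661 / 500 = 661 / 662 * (331 / 250)) ?(Rpow_mult_distr (661 / 662)); last lra.
  have := Rmult_le_compat_l _ _ _ (Rmult_le_pos _ _ c_ge0 rho_ge0) (@fq_lower (2 + k) isT).
  lra.
have n_le : INR (6 + k) <= 3 * INR (2 + k) by rewrite !plus_INR /=; have := pos_INR k; lra.
have wfq_ge0 : 0 <= wfq (2 + k) := wsum_ge0 _ _.
have := Rmult_le_compat _ _ _ _ (pos_INR _) wfq_ge0 n_le wfq_le.
have := count_spread_small k.
have := count_predC (spread_large (/ ln 2) (6 + k)) (iota (fq (6 + k)) (fq (2 + k))).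
rewrite size_iota.
set P := spread_large _ _; set b := INR (count (predC P) _); set N := INR (fq (2 + k)).
move=> /(congr1 INR); rewrite plus_INR -/b -/N => sizeE bad_le bad_le'.
have N_pos : 0 < N by apply/lt_0_INR/ltP/fq_gt0.
have : 0 <= b / N by apply: Rmult_le_pos; [apply: pos_INR | apply/Rlt_le/Rinv_0_lt_compat].
have : b / N <= 24 * INR (fq 21) * (INR (2 + k) * (661 / 662) ^ (2 + k)).
  apply: (Rmult_le_reg_r N) => //.
  by rewrite (_ : b / N * N = b); [lra | field; lra].
rewrite (_ : INR (count P _) = N - b); last lra.
rewrite (_ : (N - b) / N = 1 - b / N); last by field; lra.
lra.
Qed.

Lemma Un_cv_nat_mul_pow rho : 0 <= rho < 1 -> Un_cv (fun n => INR n * rho ^ n) 0.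
Proof.
move=> [rho_ge0 rho_lt1] eps eps_pos.
pose d := (1 - rho) / 2; pose sigma := (1 + d) * rho.
have d_pos : 0 < d by rewrite /d; lra.
have sigma_lt1 : Rabs sigma < 1 by rewrite Rabs_pos_eq /sigma /d; nra.
have [N HN] := pow_lt_1_zero _ sigma_lt1 (eps * d) (Rmult_lt_0_compat _ _ eps_pos d_pos).
exists N => n /HN; rewrite /R_dist Rminus_0_r Rabs_pos_eq; last first.
  by apply: pow_le; rewrite /sigma; nra.
have rho_n_ge0 : 0 <= rho ^ n by apply: pow_le.
rewrite Rabs_pos_eq; last by apply: Rmult_le_pos; [apply: pos_INR | ].
(* [poly] is Bernoulli's inequality 1 + n d <= (1 + d) ^ n. *)
have := Rmult_le_compat_r _ _ _ rho_n_ge0 (poly n d d_pos).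
rewrite /sigma Rpow_mult_distr; nra.
Qed.

Lemma Un_cv_squeeze_one (x u : nat -> R) K : Un_cv u 0 ->
  (forall n, 1 - K * u n <= x n <= 1) -> Un_cv x 1.
Proof.
move=> cv_u bounds eps eps_pos.
have K1_pos : 0 < Rabs K + 1 by have := Rabs_pos K; lra.
have [N HN] := cv_u (eps / (Rabs K + 1)) (Rdiv_lt_0_compat _ _ eps_pos K1_pos).
exists N => n /HN; rewrite /R_dist Rminus_0_r => small_u.
have [lo hi] := bounds n.
have Ku_small : Rabs (K * u n) < eps.
  rewrite Rabs_mult; apply: Rle_lt_trans (_ : (Rabs K + 1) * Rabs (u n) < eps).
    by have := Rabs_pos (u n); nra.
  move: small_u => /(Rmult_lt_compat_l _ _ _ K1_pos).
  by rewrite /Rdiv -Rmult_assoc Rinv_r_simpl_m; lra.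
have [Ku_lt Ku_gt] := Rabs_def2 _ _ Ku_small.
by apply: Rabs_def1; lra.
Qed.

Theorem theorem1p19 :
  exists C : R, (0 < C)%R /\
    Un_cv (fun n : nat =>
             (INR (count (fun m : nat =>
                            if Rle_dec (C * ln (INR n))%R (INR (kmax m) - INR (kmin m))%R
                            then true else false)
                         (iota (q n) (q n.+1 - q n)))
              / INR (q n.+1 - q n))%R)
          1%R.
Proof.
exists (/ ln 2); split; first exact/Rinv_0_lt_compat/ln2_gt0.
apply: (CV_shift _ 6).
apply: (@Un_cv_squeeze_one _ (fun n => INR (n + 2) * (661 / 662) ^ (n + 2)) (24 * INR (fq 21))).
  by apply: (CV_shift' (fun n => INR n * (661 / 662) ^ n)); apply: Un_cv_nat_mul_pow; lra.
move=> n; rewrite !q_fq (Nat.add_comm n 6) (addnC n 2%N).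
have -> : (fq (6 + n)%coq_nat.+1 - fq (6 + n)%coq_nat)%N = fq (2 + n).
  exact: addKn (fq (6 + n)) (fq (2 + n)).
exact: spread_large_fraction n.
Qed.
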